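(* Suppose each population has a weakly dominating strategy, in the following sense: for population 1, either $a(r)\ge c(r)$ and $b(r)\ge d(r)$ for all $r\in[0,1]$ with both inequalities strict for all $r\in(0,1)$, or $c(r)\ge a(r)$ and $d(r)\ge b(r)$ for all $r\in[0,1]$ with both inequalities strict for all $r\in(0,1)$; and for population 2, either $e(r)\ge g(r)$ and $f(r)\ge k(r)$ for all $r\in[0,1]$ with both inequalities strict for all $r\in(0,1)$, or $g(r)\ge e(r)$ and $k(r)\ge f(r)$ for all $r\in[0,1]$ with both inequalities strict for all $r\in(0,1)$. Then for every initial condition $(x_0,y_0,r_0)\in(0,1)^3$, the solution $(x(t),y(t),r(t))$ of $(\ast)$ converges to the boundary of the cube $[0,1]^3$, i.e. its distance to $\partial[0,1]^3$ tends to $0$ as $t\to\infty$.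
   Context: Two-population co-evolutionary system. Let $a,b,c,d,e,f,g,k:[0,1]\to\mathbb{R}$ be affine functions of the environmental variable $r$. Population 1 has payoff matrix $A(r)=\begin{bmatrix}a(r)&b(r)\\ c(r)&d(r)\end{bmatrix}$, population 2 has payoff matrix $B(r)=\begin{bmatrix}e(r)&f(r)\\ g(r)&k(r)\end{bmatrix}$. Let $\theta_1,\theta_2>0$. The system $(\ast)$ on $[0,1]^3$ with state $(x,y,r)$ ($x$, $y$ the fractions of strategy 1 in populations 1 and 2, $r$ the environmental state) is $\dot x = x(1-x)F(y,r)$, $\dot y = y(1-y)G(x,r)$, $\dot r = r(1-r)H(x,y)$, where $F(y,r)=(a(r)-b(r)-c(r)+d(r))y+b(r)-d(r)$, $G(x,r)=(e(r)-f(r)-g(r)+k(r))x+f(r)-k(r)$, $H(x,y)=(1+\theta_1)x+(1+\theta_2)y-2$. *)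

From Stdlib Require Import Reals.
Open Scope R_scope.

Definition affine01 (f : R -> R) : Prop :=
  exists p q : R, forall r, 0 <= r <= 1 -> f r = p + q * r.

Definition weakly_dominant (a b c d : R -> R) : Prop :=
  ((forall r, 0 <= r <= 1 -> a r >= c r /\ b r >= d r) /\
   (forall r, 0 < r < 1 -> a r > c r /\ b r > d r))
  \/
  ((forall r, 0 <= r <= 1 -> c r >= a r /\ d r >= b r) /\
   (forall r, 0 < r < 1 -> c r > a r /\ d r > b r)).

Definition Ffun (a b c d : R -> R) (y r : R) : R :=
  (a r - b r - c r + d r) * y + b r - d r.

Definition Gfun (e f g k : R -> R) (x r : R) : R :=
  (e r - f r - g r + k r) * x + f r - k r.

Definition Hfun (th1 th2 x y : R) : R :=
  (1 + th1) * x + (1 + th2) * y - 2.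

(* Distance of a point of the cube [0,1]^3 to its boundary (sup-norm = Euclidean
   distance to the nearest face for points inside the cube). *)
Definition dist_bd (x y r : R) : R :=
  Rmin (Rmin (Rmin x (1 - x)) (Rmin y (1 - y))) (Rmin r (1 - r)).

(* The interior of the cube is invariant, since each face is invariant for the
   replicator-type vector field.  Relabelling the strategies of population 1 if
   necessary, strategy 1 weakly dominates, so F >= 0 on the cube and x is
   nondecreasing.  On a compact band [eps/2, 1 - eps/2] of r the strict dominance
   makes F >= mu > 0, so while x and r lie in that band x grows at a rate
   bounded below.  The velocities being bounded, every visit of (x, r) to
   [eps, 1 - eps]^2 keeps them in the wider band for a fixed time and hence
   raises x by a fixed amount; as x < 1, such visits stop eventually, which is
   the claim. *)

From Stdlib Require Import Reals Lra Psatz Classical.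
Open Scope R_scope.

Lemma derivable_pt_lim_continuity_pt (f : R -> R) (t l : R) :
  derivable_pt_lim f t l -> continuity_pt f t.
Proof. intros Hd; apply derivable_continuous_pt; exists l; exact Hd. Qed.

Lemma continuity_pt_ball (f : R -> R) (t eps : R) :
  continuity_pt f t -> 0 < eps ->
  exists del, 0 < del /\ forall u, Rabs (u - t) < del -> Rabs (f u - f t) < eps.
Proof.
  intros Hc Heps.
  destruct (Hc eps Heps) as [del [Hdel Hball]].
  exists del; split; [exact Hdel|]; intros u Hu.
  destruct (Req_dec u t) as [->|Hne].
  - unfold Rminus; rewrite Rplus_opp_r, Rabs_R0; exact Heps.
  - apply Hball; repeat split; auto.
Qed.

Lemma continuity_pt_approx_left (f : R -> R) (t eps : R) :
  continuity_pt f t -> 0 < t -> 0 < eps ->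
  exists u, 0 <= u < t /\ Rabs (f u - f t) < eps.
Proof.
  intros Hc Ht Heps.
  destruct (continuity_pt_ball f t eps Hc Heps) as [del [Hdel Hball]].
  exists (Rmax 0 (t - del / 2)).
  assert (Hu : 0 <= Rmax 0 (t - del / 2) < t /\ Rabs (Rmax 0 (t - del / 2) - t) < del).
  { unfold Rmax; destruct Rle_dec; rewrite Rabs_left1 by lra; lra. }
  split; [apply Hu | apply Hball, Hu].
Qed.

Lemma continuity_pt_bounds_of_left (f : R -> R) (lo hi t : R) :
  continuity_pt f t -> 0 < t ->
  (forall u, 0 <= u < t -> lo <= f u <= hi) -> lo <= f t <= hi.
Proof.
  intros Hc Ht Hbd.
  split; apply Rnot_lt_le; intros Hout.
  - destruct (continuity_pt_approx_left f t (lo - f t) Hc Ht ltac:(lra)) as [u [Hu Hfu]].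
    apply Rabs_def2 in Hfu; specialize (Hbd u Hu); lra.
  - destruct (continuity_pt_approx_left f t (f t - hi) Hc Ht ltac:(lra)) as [u [Hu Hfu]].
    apply Rabs_def2 in Hfu; specialize (Hbd u Hu); lra.
Qed.

Lemma continuity_pt_open_interval (f : R -> R) (lo hi t : R) :
  continuity_pt f t -> lo < f t < hi ->
  exists del, 0 < del /\ forall u, Rabs (u - t) < del -> lo < f u < hi.
Proof.
  intros Hc Hft.
  destruct (continuity_pt_ball f t (Rmin (f t - lo) (hi - f t)) Hc) as [del [Hdel Hball]].
  { apply Rmin_pos; lra. }
  exists del; split; [exact Hdel|]; intros u Hu.
  specialize (Hball u Hu); apply Rabs_def2 in Hball.
  pose proof (Rmin_l (f t - lo) (hi - f t)); pose proof (Rmin_r (f t - lo) (hi - f t)).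
  lra.
Qed.

Lemma real_induction (P : R -> Prop) :
  (forall t, 0 <= t -> (forall u, 0 <= u < t -> P u) -> P t) ->
  (forall t, 0 <= t -> P t -> exists del, 0 < del /\ forall u, t <= u < t + del -> P u) ->
  forall t, 0 <= t -> P t.
Proof.
  intros Hstep Hfwd t1 Ht1.
  apply NNPP; intros HPt1.
  set (E := fun s => 0 <= s <= t1 /\ forall u, 0 <= u <= s -> P u).
  assert (HP0 : P 0) by (apply Hstep; [lra | intros u Hu; lra]).
  assert (HE0 : E 0).
  { split; [lra|]; intros u Hu; replace u with 0 by lra; exact HP0. }
  assert (HEb : bound E) by (exists t1; intros s [Hs _]; lra).
  destruct (completeness E HEb (ex_intro _ 0 HE0)) as [m [Hub Hlub]].
  assert (Hm0 : 0 <= m) by (apply Hub, HE0).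
  assert (Hmt1 : m <= t1) by (apply Hlub; intros s [Hs _]; lra).
  (* Every u < m with P u false would be an upper bound of E below m. *)
  assert (Hbelow : forall u, 0 <= u < m -> P u).
  { intros u Hu; apply NNPP; intros HPu.
    assert (Hubu : is_upper_bound E u).
    { intros s [_ Hs]; apply Rnot_lt_le; intros Hus; apply HPu, Hs; lra. }
    specialize (Hlub u Hubu); lra. }
  assert (HPm : P m) by (apply Hstep; auto).
  assert (Hmlt : m < t1).
  { destruct (Req_dec m t1) as [<-|]; [contradiction | lra]. }
  destruct (Hfwd m Hm0 HPm) as [del [Hdel Hnext]].
  set (s := Rmin (m + del / 2) t1).
  assert (Hs : m < s <= t1 /\ s < m + del).
  { unfold s, Rmin; destruct Rle_dec; lra. }
  assert (HEs : E s).
  { split; [lra|]; intros u Hu.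
    destruct (Rlt_le_dec u m); [apply Hbelow | apply Hnext]; lra. }
  specialize (Hub s HEs); lra.
Qed.

Lemma increment_ge_of_deriv_ge (w w' : R -> R) (m s t : R) :
  s <= t ->
  (forall c, s <= c <= t -> derivable_pt_lim w c (w' c)) ->
  (forall c, s <= c <= t -> m <= w' c) ->
  w s + m * (t - s) <= w t.
Proof.
  intros Hst Hd Hm.
  destruct (Req_dec s t) as [<-|Hne].
  - replace (s - s) with 0 by ring; lra.
  - destruct (MVT_cor2 w w' s t ltac:(lra) Hd) as [c [Heq Hc]].
    specialize (Hm c ltac:(lra)); nra.
Qed.

Lemma increment_le_of_deriv_le (w w' : R -> R) (M s t : R) :
  s <= t ->
  (forall c, s <= c <= t -> derivable_pt_lim w c (w' c)) ->
  (forall c, s <= c <= t -> w' c <= M) ->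
  w t <= w s + M * (t - s).
Proof.
  intros Hst Hd HM.
  pose proof (increment_ge_of_deriv_ge (fun u => - w u) (fun u => - w' u) (- M) s t Hst
    (fun c Hc => derivable_pt_lim_opp w c (w' c) (Hd c Hc))
    (fun c Hc => Ropp_le_contravar _ _ (HM c Hc))).
  lra.
Qed.

(* Gronwall: [u t * exp (K t)] is nondecreasing. *)
Lemma pos_of_deriv_ge_neg_mul (u u' : R -> R) (K T : R) :
  0 <= T ->
  (forall t, 0 <= t <= T -> derivable_pt_lim u t (u' t)) ->
  (forall t, 0 <= t <= T -> - K * u t <= u' t) ->
  0 < u 0 -> 0 < u T.
Proof.
  intros HT Hd Hge Hu0.
  assert (Hdexp : forall t, derivable_pt_lim (fun s => exp (K * s)) t (exp (K * t) * K)).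
  { intros t.
    apply (derivable_pt_lim_comp (fun s => K * s) exp).
    - pose proof (derivable_pt_lim_scal id K t 1 (derivable_pt_lim_id t)) as Hlin.
      rewrite Rmult_1_r in Hlin; exact Hlin.
    - apply derivable_pt_lim_exp. }
  assert (Hmono := increment_ge_of_deriv_ge (fun t => u t * exp (K * t))
    (fun t => u' t * exp (K * t) + u t * (exp (K * t) * K)) 0 0 T HT
    (fun t Ht => derivable_pt_lim_mult u (fun s => exp (K * s)) t _ _ (Hd t Ht) (Hdexp t))).
  simpl in Hmono; rewrite Rmult_0_r, exp_0 in Hmono.
  pose proof (exp_pos (K * T)).
  enough (0 < u T * exp (K * T)) by nra.
  enough (u 0 <= u T * exp (K * T)) by lra.
  replace (u 0) with (u 0 * 1 + 0 * (T - 0)) by ring.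
  apply Hmono; intros c Hc.
  specialize (Hge c Hc); pose proof (exp_pos (K * c)); nra.
Qed.

Lemma logistic_mirror (z : R -> R) (Phi t : R) :
  derivable_pt_lim z t (z t * (1 - z t) * Phi) ->
  derivable_pt_lim (fun s => 1 - z s) t ((1 - z t) * (1 - (1 - z t)) * - Phi).
Proof.
  intros Hd.
  replace ((1 - z t) * (1 - (1 - z t)) * - Phi) with (0 - z t * (1 - z t) * Phi) by ring.
  exact (derivable_pt_lim_minus (fct_cte 1) z t _ _ (derivable_pt_lim_const 1 t) Hd).
Qed.

Lemma logistic_pos (z Phi : R -> R) (K T : R) :
  0 <= K -> 0 <= T ->
  (forall t, 0 <= t <= T -> derivable_pt_lim z t (z t * (1 - z t) * Phi t)) ->
  (forall t, 0 <= t <= T -> 0 <= z t <= 1 /\ - K <= Phi t) ->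
  0 < z 0 -> 0 < z T.
Proof.
  intros HK HT Hd Hbd Hz0.
  apply (pos_of_deriv_ge_neg_mul z (fun t => z t * (1 - z t) * Phi t) K T HT Hd); auto.
  intros t Ht; destruct (Hbd t Ht) as [Hz HPhi].
  assert (0 <= z t * (1 - z t) <= z t) by nra.
  nra.
Qed.

Lemma logistic_in_open_unit (z Phi : R -> R) (K T : R) :
  0 <= K -> 0 <= T ->
  (forall t, 0 <= t <= T -> derivable_pt_lim z t (z t * (1 - z t) * Phi t)) ->
  (forall t, 0 <= t <= T -> 0 <= z t <= 1 /\ - K <= Phi t <= K) ->
  0 < z 0 < 1 -> 0 < z T < 1.
Proof.
  intros HK HT Hd Hbd Hz0.
  split.
  - apply (logistic_pos z Phi K T); auto; [|lra].
    intros t Ht; destruct (Hbd t Ht); split; [|lra]; auto.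
  - enough (0 < 1 - z T) by lra.
    apply (logistic_pos (fun s => 1 - z s) (fun s => - Phi s) K T); auto; [| |lra].
    + intros t Ht; apply logistic_mirror, Hd, Ht.
    + intros t Ht; destruct (Hbd t Ht); lra.
Qed.

Lemma closed_unit_of_open_before (z z' : R -> R) (t : R) :
  (forall s, 0 <= s -> derivable_pt_lim z s (z' s)) -> 0 < t ->
  (forall v, 0 <= v < t -> 0 < z v < 1) -> forall u, 0 <= u <= t -> 0 <= z u <= 1.
Proof.
  intros Hz Ht Hbefore u Hu.
  destruct (Rlt_le_dec u t) as [Hlt|Hge].
  - specialize (Hbefore u ltac:(lra)); lra.
  - replace u with t by lra.
    apply continuity_pt_bounds_of_left; [| exact Ht |].
    + eapply derivable_pt_lim_continuity_pt, Hz; lra.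
    + intros v Hv; specialize (Hbefore v Hv); lra.
Qed.

Lemma open_unit_persists (z : R -> R) (l t : R) :
  derivable_pt_lim z t l -> 0 < z t < 1 ->
  exists del, 0 < del /\ forall u, t <= u < t + del -> 0 < z u < 1.
Proof.
  intros Hz Hzt.
  destruct (continuity_pt_open_interval z 0 1 t (derivable_pt_lim_continuity_pt _ _ _ Hz) Hzt)
    as [del [Hdel Hball]].
  exists del; split; [exact Hdel|]; intros u Hu.
  apply Hball; rewrite Rabs_right; lra.
Qed.

Lemma replicator_interior_invariant (x y r Fx Fy Fr : R -> R) (K : R) :
  0 <= K ->
  (forall t, 0 <= t -> derivable_pt_lim x t (x t * (1 - x t) * Fx t)) ->
  (forall t, 0 <= t -> derivable_pt_lim y t (y t * (1 - y t) * Fy t)) ->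
  (forall t, 0 <= t -> derivable_pt_lim r t (r t * (1 - r t) * Fr t)) ->
  (forall t, 0 <= t -> 0 <= x t <= 1 -> 0 <= y t <= 1 -> 0 <= r t <= 1 ->
     - K <= Fx t <= K /\ - K <= Fy t <= K /\ - K <= Fr t <= K) ->
  0 < x 0 < 1 -> 0 < y 0 < 1 -> 0 < r 0 < 1 ->
  forall t, 0 <= t -> 0 < x t < 1 /\ 0 < y t < 1 /\ 0 < r t < 1.
Proof.
  intros HK Hx Hy Hr Hbd Hx0 Hy0 Hr0.
  apply real_induction.
  - intros t Ht Hbefore.
    destruct (Req_dec t 0) as [->|Ht0]; [auto|].
    assert (Hcube : forall u, 0 <= u <= t ->
      0 <= x u <= 1 /\ 0 <= y u <= 1 /\ 0 <= r u <= 1).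
    { intros u Hu; split; [|split];
        [ apply (closed_unit_of_open_before x _ t Hx)
        | apply (closed_unit_of_open_before y _ t Hy)
        | apply (closed_unit_of_open_before r _ t Hr) ]; auto; try lra;
        intros v Hv; apply Hbefore, Hv. }
    assert (HF : forall u, 0 <= u <= t ->
      - K <= Fx u <= K /\ - K <= Fy u <= K /\ - K <= Fr u <= K).
    { intros u Hu; destruct (Hcube u Hu) as [? [? ?]]; apply Hbd; auto; lra. }
    split; [|split].
    + apply (logistic_in_open_unit x Fx K t); auto.
      * intros u Hu; apply Hx; lra.
      * intros u Hu; split; [apply Hcube | apply HF]; auto.
    + apply (logistic_in_open_unit y Fy K t); auto.
      * intros u Hu; apply Hy; lra.
      * intros u Hu; split; [apply Hcube | apply HF]; auto.
    + apply (logistic_in_open_unit r Fr K t); auto.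
      * intros u Hu; apply Hr; lra.
      * intros u Hu; split; [apply Hcube | apply HF]; auto.
  - intros t Ht [Hxt [Hyt Hrt]].
    destruct (open_unit_persists x _ t (Hx t Ht) Hxt) as [d1 [Hd1 G1]].
    destruct (open_unit_persists y _ t (Hy t Ht) Hyt) as [d2 [Hd2 G2]].
    destruct (open_unit_persists r _ t (Hr t Ht) Hrt) as [d3 [Hd3 G3]].
    exists (Rmin d1 (Rmin d2 d3)); split; [repeat apply Rmin_pos; auto|].
    intros u Hu.
    pose proof (Rmin_l d1 (Rmin d2 d3)); pose proof (Rmin_r d1 (Rmin d2 d3)).
    pose proof (Rmin_l d2 d3); pose proof (Rmin_r d2 d3).
    split; [apply G1 | split; [apply G2 | apply G3]]; lra.
Qed.

Lemma affine01_bounded (f : R -> R) :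
  affine01 f -> exists B, 0 <= B /\ forall s, 0 <= s <= 1 -> - B <= f s <= B.
Proof.
  intros [p [q Hf]].
  exists (Rabs p + Rabs q); split; [pose proof (Rabs_pos p); pose proof (Rabs_pos q); lra|].
  intros s Hs; rewrite Hf by exact Hs.
  pose proof (Rle_abs p); pose proof (Rle_abs (- p)); pose proof (Rle_abs q);
    pose proof (Rle_abs (- q)); rewrite Rabs_Ropp in *.
  split; nra.
Qed.

Lemma affine01_sub (f g : R -> R) :
  affine01 f -> affine01 g -> affine01 (fun s => f s - g s).
Proof.
  intros [p [q Hf]] [p' [q' Hg]]; exists (p - p'), (q - q').
  intros s Hs; rewrite Hf, Hg by exact Hs; ring.
Qed.

Lemma affine01_pos_on_band (phi : R -> R) (al : R) :
  affine01 phi -> (forall s, 0 < s < 1 -> 0 < phi s) -> 0 < al < 1 ->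
  exists mu, 0 < mu /\ forall s, al <= s <= 1 - al -> mu <= phi s.
Proof.
  intros [p [q Hphi]] Hpos Hal.
  exists (Rmin (phi al) (phi (1 - al))); split.
  - apply Rmin_pos; apply Hpos; lra.
  - intros s Hs.
    destruct (Rle_lt_dec 0 q).
    + apply (Rle_trans _ (phi al)); [apply Rmin_l|].
      rewrite !Hphi by lra; nra.
    + apply (Rle_trans _ (phi (1 - al))); [apply Rmin_r|].
      rewrite !Hphi by lra; nra.
Qed.

Lemma Ffun_mix (a b c d : R -> R) (y s : R) :
  Ffun a b c d y s = y * (a s - c s) + (1 - y) * (b s - d s).
Proof. unfold Ffun; ring. Qed.

Lemma Ffun_swap (a b c d : R -> R) (y s : R) :
  Ffun c d a b y s = - Ffun a b c d y s.
Proof. unfold Ffun; ring. Qed.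

Lemma Ffun_bounded (a b c d : R -> R) :
  affine01 a -> affine01 b -> affine01 c -> affine01 d ->
  exists K, 0 <= K /\
    forall y s, 0 <= y <= 1 -> 0 <= s <= 1 -> - K <= Ffun a b c d y s <= K.
Proof.
  intros Ha Hb Hc Hd.
  destruct (affine01_bounded a Ha) as [Ba [HBa0 HBa]].
  destruct (affine01_bounded b Hb) as [Bb [HBb0 HBb]].
  destruct (affine01_bounded c Hc) as [Bc [HBc0 HBc]].
  destruct (affine01_bounded d Hd) as [Bd [HBd0 HBd]].
  exists (Ba + Bb + Bc + Bd); split; [lra|].
  intros y s Hy Hs; rewrite Ffun_mix.
  specialize (HBa s Hs); specialize (HBb s Hs); specialize (HBc s Hs); specialize (HBd s Hs).
  split; nra.
Qed.

Lemma Ffun_nonneg (a b c d : R -> R) (y s : R) :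
  0 <= y <= 1 -> c s <= a s -> d s <= b s -> 0 <= Ffun a b c d y s.
Proof. intros; rewrite Ffun_mix; nra. Qed.

Lemma Ffun_pos_on_band (a b c d : R -> R) (al : R) :
  affine01 a -> affine01 b -> affine01 c -> affine01 d ->
  (forall s, 0 < s < 1 -> c s < a s /\ d s < b s) -> 0 < al < 1 ->
  exists mu, 0 < mu /\
    forall y s, 0 <= y <= 1 -> al <= s <= 1 - al -> mu <= Ffun a b c d y s.
Proof.
  intros Ha Hb Hc Hd Hgt Hal.
  destruct (affine01_pos_on_band (fun s => a s - c s) al (affine01_sub a c Ha Hc))
    as [mu1 [Hmu1 H1]]; [intros s Hs; destruct (Hgt s Hs); lra | exact Hal |].
  destruct (affine01_pos_on_band (fun s => b s - d s) al (affine01_sub b d Hb Hd))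
    as [mu2 [Hmu2 H2]]; [intros s Hs; destruct (Hgt s Hs); lra | exact Hal |].
  exists (Rmin mu1 mu2); split; [apply Rmin_pos; auto|].
  intros y s Hy Hs; rewrite Ffun_mix.
  specialize (H1 s Hs); specialize (H2 s Hs).
  pose proof (Rmin_l mu1 mu2); pose proof (Rmin_r mu1 mu2).
  nra.
Qed.

Lemma nondecreasing_bounded_gain_not_recurrent (w : R -> R) (P : R -> Prop)
    (B de gain : R) :
  0 <= de -> 0 < gain ->
  (forall s t, 0 <= s <= t -> w s <= w t) ->
  (forall t, 0 <= t -> w t <= B) ->
  (forall t, 0 <= t -> P t -> w t + gain <= w (t + de)) ->
  ~ (forall T, exists t, T <= t /\ P t).
Proof.
  intros Hde Hgain Hmono HB Hjump Hrec.
  assert (Hgrow : forall n, exists t, 0 <= t /\ w 0 + INR n * gain <= w t).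
  { induction n as [|n [t [Ht IH]]].
    - exists 0; simpl; lra.
    - destruct (Hrec t) as [t' [Htt' HP]].
      exists (t' + de); split; [lra|].
      pose proof (Hmono t t' ltac:(lra)); pose proof (Hjump t' ltac:(lra) HP).
      rewrite S_INR; lra. }
  destruct (INR_archimed gain (B - w 0) Hgain) as [n Hn].
  destruct (Hgrow n) as [t [Ht Hwt]].
  specialize (HB t Ht); lra.
Qed.

Lemma gain_through_band_not_recurrent (w w' v v' : R -> R) (K m eps : R) :
  0 < eps -> 0 < m ->
  (forall t, 0 <= t -> derivable_pt_lim w t (w' t)) ->
  (forall t, 0 <= t -> derivable_pt_lim v t (v' t)) ->
  (forall t, 0 <= t -> w t <= 1) ->
  (forall t, 0 <= t -> 0 <= w' t <= K /\ - K <= v' t <= K) ->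
  (forall t, 0 <= t -> eps / 2 <= w t <= 1 - eps / 2 ->
     eps / 2 <= v t <= 1 - eps / 2 -> m <= w' t) ->
  ~ (forall T, exists t, T <= t /\ eps <= w t <= 1 - eps /\ eps <= v t <= 1 - eps).
Proof.
  intros Heps Hm Hw Hv Hw1 Hbd Hband.
  assert (HK : 0 <= K) by (destruct (Hbd 0 ltac:(lra)); lra).
  set (de := eps / (2 * (K + 1))).
  assert (Hde : 0 < de) by (unfold de; apply Rdiv_lt_0_compat; lra).
  assert (HKde : K * de <= eps / 2).
  { unfold de; apply (Rmult_le_reg_r (2 * (K + 1))); [lra|].
    field_simplify; [nra | lra]. }
  apply (nondecreasing_bounded_gain_not_recurrent w
    (fun t => eps <= w t <= 1 - eps /\ eps <= v t <= 1 - eps) 1 de (m * de));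
    [lra | nra | | exact Hw1 |].
  - intros s t Hst.
    pose proof (increment_ge_of_deriv_ge w w' 0 s t ltac:(lra)
      (fun c Hc => Hw c ltac:(lra)) (fun c Hc => proj1 (proj1 (Hbd c ltac:(lra))))).
    lra.
  - intros t Ht [Hwt Hvt].
    (* During [t, t + de] the velocities move w and v by at most K de <= eps / 2. *)
    assert (Hstay : forall c, t <= c <= t + de ->
      eps / 2 <= w c <= 1 - eps / 2 /\ eps / 2 <= v c <= 1 - eps / 2).
    { intros c Hc.
      assert (HKc : K * (c - t) <= eps / 2) by nra.
      pose proof (increment_ge_of_deriv_ge w w' 0 t c ltac:(lra)
        (fun u Hu => Hw u ltac:(lra)) (fun u Hu => proj1 (proj1 (Hbd u ltac:(lra))))).
      pose proof (increment_le_of_deriv_le w w' K t c ltac:(lra)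
        (fun u Hu => Hw u ltac:(lra)) (fun u Hu => proj2 (proj1 (Hbd u ltac:(lra))))).
      pose proof (increment_ge_of_deriv_ge v v' (- K) t c ltac:(lra)
        (fun u Hu => Hv u ltac:(lra)) (fun u Hu => proj1 (proj2 (Hbd u ltac:(lra))))).
      pose proof (increment_le_of_deriv_le v v' K t c ltac:(lra)
        (fun u Hu => Hv u ltac:(lra)) (fun u Hu => proj2 (proj2 (Hbd u ltac:(lra))))).
      lra. }
    pose proof (increment_ge_of_deriv_ge w w' m t (t + de) ltac:(lra)
      (fun c Hc => Hw c ltac:(lra))
      (fun c Hc => Hband c ltac:(lra) (proj1 (Hstay c Hc)) (proj2 (Hstay c Hc)))).
    replace (t + de - t) with de in * by ring; lra.
Qed.

Lemma dominant_first_strategy_not_recurrent (a b c d x y r r' : R -> R) (K eps : R) :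
  affine01 a -> affine01 b -> affine01 c -> affine01 d ->
  (forall s, 0 <= s <= 1 -> c s <= a s /\ d s <= b s) ->
  (forall s, 0 < s < 1 -> c s < a s /\ d s < b s) ->
  (forall y0 s, 0 <= y0 <= 1 -> 0 <= s <= 1 -> Ffun a b c d y0 s <= K) ->
  0 < eps ->
  (forall t, 0 <= t -> 0 < x t < 1 /\ 0 < y t < 1 /\ 0 < r t < 1) ->
  (forall t, 0 <= t -> derivable_pt_lim x t (x t * (1 - x t) * Ffun a b c d (y t) (r t))) ->
  (forall t, 0 <= t -> derivable_pt_lim r t (r' t)) ->
  (forall t, 0 <= t -> - K <= r' t <= K) ->
  ~ (forall T, exists t, T <= t /\ eps <= x t <= 1 - eps /\ eps <= r t <= 1 - eps).
Proof.
  intros Ha Hb Hc Hd Hge Hgt HK Heps Hcube Hx Hr Hr' Hrec.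
  destruct (Rlt_le_dec eps 1) as [Heps1|Heps1].
  2: { destruct (Hrec 0) as [t [_ [Hxt _]]]; lra. }
  destruct (Ffun_pos_on_band a b c d (eps / 2) Ha Hb Hc Hd Hgt ltac:(lra))
    as [mu [Hmu Hband]].
  revert Hrec.
  apply (gain_through_band_not_recurrent x
    (fun t => x t * (1 - x t) * Ffun a b c d (y t) (r t)) r r' K
    (eps / 2 * (1 - eps / 2) * mu) eps Heps); auto.
  - apply Rmult_lt_0_compat; [nra | exact Hmu].
  - intros t Ht; destruct (Hcube t Ht); lra.
  - intros t Ht; destruct (Hcube t Ht) as [Hxt [Hyt Hrt]].
    assert (Hyt' : 0 <= y t <= 1) by lra; assert (Hrt' : 0 <= r t <= 1) by lra.
    destruct (Hge (r t) Hrt').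
    pose proof (Ffun_nonneg a b c d (y t) (r t) Hyt' ltac:(lra) ltac:(lra)).
    pose proof (HK (y t) (r t) Hyt' Hrt').
    assert (0 <= x t * (1 - x t) <= 1) by nra.
    split; [nra | apply Hr', Ht].
  - intros t Ht Hxt Hrt; destruct (Hcube t Ht) as [_ [Hyt _]].
    pose proof (Hband (y t) (r t) ltac:(lra) Hrt).
    assert (eps / 2 * (1 - eps / 2) <= x t * (1 - x t)) by nra.
    apply Rmult_le_compat; nra.
Qed.

Lemma weakly_dominant_not_recurrent (a b c d x y r r' : R -> R) (K eps : R) :
  affine01 a -> affine01 b -> affine01 c -> affine01 d -> weakly_dominant a b c d ->
  (forall y0 s, 0 <= y0 <= 1 -> 0 <= s <= 1 -> - K <= Ffun a b c d y0 s <= K) ->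
  0 < eps ->
  (forall t, 0 <= t -> 0 < x t < 1 /\ 0 < y t < 1 /\ 0 < r t < 1) ->
  (forall t, 0 <= t -> derivable_pt_lim x t (x t * (1 - x t) * Ffun a b c d (y t) (r t))) ->
  (forall t, 0 <= t -> derivable_pt_lim r t (r' t)) ->
  (forall t, 0 <= t -> - K <= r' t <= K) ->
  ~ (forall T, exists t, T <= t /\ eps <= x t <= 1 - eps /\ eps <= r t <= 1 - eps).
Proof.
  intros Ha Hb Hc Hd [[Hge Hgt] | [Hge Hgt]] HK Heps Hcube Hx Hr Hr'.
  - apply (dominant_first_strategy_not_recurrent a b c d x y r r' K eps Ha Hb Hc Hd);
      auto.
    + intros s Hs; destruct (Hge s Hs); lra.
    + intros y0 s Hy Hs; apply HK; auto.
  - (* Relabelling the strategies of population 1 turns [x] into [1 - x]. *)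
    intros Hrec.
    apply (dominant_first_strategy_not_recurrent c d a b (fun t => 1 - x t) y r r' K eps
      Hc Hd Ha Hb); auto.
    + intros s Hs; destruct (Hge s Hs); lra.
    + intros y0 s Hy Hs; rewrite Ffun_swap; destruct (HK y0 s Hy Hs); lra.
    + intros t Ht; destruct (Hcube t Ht) as [? [? ?]]; repeat split; lra.
    + intros t Ht; rewrite Ffun_swap; apply logistic_mirror, Hx, Ht.
    + intros T; destruct (Hrec T) as [t [? [? ?]]]; exists t; repeat split; lra.
Qed.

Lemma replicator_rates_bounded (a b c d e f g k : R -> R) (th1 th2 : R) :
  affine01 a -> affine01 b -> affine01 c -> affine01 d ->
  affine01 e -> affine01 f -> affine01 g -> affine01 k ->
  exists K, 0 <= K /\ forall x y r, 0 <= x <= 1 -> 0 <= y <= 1 -> 0 <= r <= 1 ->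
    - K <= Ffun a b c d y r <= K /\ - K <= Gfun e f g k x r <= K /\
    - K <= Hfun th1 th2 x y <= K.
Proof.
  intros Ha Hb Hc Hd He Hf Hg Hk.
  destruct (Ffun_bounded a b c d Ha Hb Hc Hd) as [KF [HKF0 HKF]].
  destruct (Ffun_bounded e f g k He Hf Hg Hk) as [KG [HKG0 HKG]].
  pose proof (Rabs_pos th1); pose proof (Rabs_pos th2).
  exists (KF + KG + 4 + Rabs th1 + Rabs th2); split; [lra|].
  intros x y r Hx Hy Hr; change (Gfun e f g k) with (Ffun e f g k).
  destruct (HKF y r Hy Hr), (HKG x r Hx Hr).
  pose proof (Rle_abs th1); pose proof (Rle_abs (- th1));
    pose proof (Rle_abs th2); pose proof (Rle_abs (- th2)); rewrite Rabs_Ropp in *.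
  unfold Hfun; split; [|split]; split; nra.
Qed.

Lemma dist_bd_ge_band (x y r eps : R) :
  0 < x < 1 -> 0 < y < 1 -> 0 < r < 1 -> ~ Rabs (dist_bd x y r) < eps ->
  eps <= x <= 1 - eps /\ eps <= r <= 1 - eps.
Proof.
  intros Hx Hy Hr Hfar.
  unfold dist_bd, Rmin in Hfar; repeat destruct Rle_dec;
    rewrite Rabs_right in Hfar by lra; lra.
Qed.

Lemma band_recurrent_of_not_converging (x y r : R -> R) (eps : R) :
  (forall t, 0 <= t -> 0 < x t < 1 /\ 0 < y t < 1 /\ 0 < r t < 1) ->
  ~ (exists T, forall t, t >= T -> Rabs (dist_bd (x t) (y t) (r t)) < eps) ->
  forall T, exists t, T <= t /\ eps <= x t <= 1 - eps /\ eps <= r t <= 1 - eps.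
Proof.
  intros Hcube Hnot T.
  destruct (not_all_ex_not _ _ (not_ex_all_not _ _ Hnot (Rmax T 0))) as [t Ht].
  apply imply_to_and in Ht; destruct Ht as [Htlate Hfar].
  pose proof (Rmax_l T 0); pose proof (Rmax_r T 0).
  destruct (Hcube t ltac:(lra)) as [Hxt [Hyt Hrt]].
  exists t; split; [lra | exact (dist_bd_ge_band _ _ _ eps Hxt Hyt Hrt Hfar)].
Qed.

Theorem theorem1
  (a b c d e f g k : R -> R) (th1 th2 : R)
  (Ha : affine01 a) (Hb : affine01 b) (Hc : affine01 c) (Hd : affine01 d)
  (He : affine01 e) (Hf : affine01 f) (Hg : affine01 g) (Hk : affine01 k)
  (Hth1 : 0 < th1) (Hth2 : 0 < th2)
  (Hdom1 : weakly_dominant a b c d) (Hdom2 : weakly_dominant e f g k)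
  (x y r : R -> R)
  (Hx0 : 0 < x 0 < 1) (Hy0 : 0 < y 0 < 1) (Hr0 : 0 < r 0 < 1)
  (Hxd : forall t, 0 <= t ->
     derivable_pt_lim x t (x t * (1 - x t) * Ffun a b c d (y t) (r t)))
  (Hyd : forall t, 0 <= t ->
     derivable_pt_lim y t (y t * (1 - y t) * Gfun e f g k (x t) (r t)))
  (Hrd : forall t, 0 <= t ->
     derivable_pt_lim r t (r t * (1 - r t) * Hfun th1 th2 (x t) (y t))) :
  forall eps, eps > 0 -> exists T, forall t, t >= T ->
    Rabs (dist_bd (x t) (y t) (r t)) < eps.
Proof.
  intros eps Heps.
  destruct (replicator_rates_bounded a b c d e f g k th1 th2 Ha Hb Hc Hd He Hf Hg Hk)
    as [K [HK Hrates]].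
  assert (Hcube := replicator_interior_invariant x y r
    (fun t => Ffun a b c d (y t) (r t)) (fun t => Gfun e f g k (x t) (r t))
    (fun t => Hfun th1 th2 (x t) (y t)) K HK Hxd Hyd Hrd
    (fun t _ => Hrates (x t) (y t) (r t)) Hx0 Hy0 Hr0).
  apply NNPP; intros Hnot.
  apply (weakly_dominant_not_recurrent a b c d x y r
    (fun t => r t * (1 - r t) * Hfun th1 th2 (x t) (y t)) K eps); auto.
  - intros y0 s Hy Hs; apply (Hrates 0 y0 s); auto; lra.
  - intros t Ht; destruct (Hcube t Ht) as [Hx [Hy Hr]].
    destruct (Hrates (x t) (y t) (r t)) as [_ [_ HH]]; try lra.
    assert (0 <= r t * (1 - r t) <= 1) by nra.
    split; nra.
  - exact (band_recurrent_of_not_converging x y r eps Hcube Hnot).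
Qed.
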